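(* Let $n\ge 5$ and let $f$ be an RDF of $P(n,2)$ of weight $\gamma_R(P(n,2))$ with $|V_2|$ minimum among all such minimum-weight RDFs. For any index $i$, if $r_f(V'(i,7)) \le 0.5$, then $v_{i+2}\notin V_2$ and $v_{i+4}\notin V_2$.
   Context: For integers $n \ge 3$ and $1 \le k < n/2$, the generalized Petersen graph $P(n,k)$ has vertex set $\{v_i, u_i : 0 \le i \le n-1\}$ and edge set $\{v_iv_{i+1},\ v_iu_i,\ u_iu_{i+k} : 0 \le i \le n-1\}$, with subscripts taken modulo $n$. A Roman domination function (RDF) of a graph $G$ is a function $f: V(G)\to\{0,1,2\}$ such that every vertex $u$ with $f(u)=0$ is adjacent to at least one vertex $v$ with $f(v)=2$. Its weight is $\sum_{u\in V(G)} f(u)$; $\gamma_R(G)$ is the minimum weight of an RDF of $G$. For an RDF $f$ write $V_i=\{w: f(w)=i\}$, $i=0,1,2$. Define $g_f(w)=0.5$ if $w\in V_2$, $g_f(w)=1$ if $w\in V_1$, and $g_f(w)=0.5\,|N(w)\cap V_2|$ if $w\in V_0$, where $N(w)$ is the set of neighbors of $w$. Let $r_f(w)=g_f(w)-0.5$ and, for $S\subseteq V(P(n,2))$, $r_f(S)=\sum_{w\in S} r_f(w)$. For an integer $i$ and $t\ge 1$, $V'(i,t)=\{v_j,u_j : i\le j\le i+t-1\}$ (subscripts modulo $n$). *)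

From HB Require Import structures.
From mathcomp Require Import all_boot all_order all_algebra.
Set Implicit Arguments. Unset Strict Implicit. Unset Printing Implicit Defensive.
Import Order.TTheory GRing.Theory Num.Theory.

(* Vertices of P(n,2): (false, i) is v_i (outer), (true, i) is u_i (inner). *)
Definition vtx (n : nat) : finType := (bool * 'I_n)%type.

Definition padj (n : nat) (x y : vtx n) : bool :=
  match x.1, y.1 with
  | false, false => ((x.2 + 1) %% n == y.2) || ((y.2 + 1) %% n == x.2)
  | true, true => ((x.2 + 2) %% n == y.2) || ((y.2 + 2) %% n == x.2)
  | _, _ => (x.2 : nat) == y.2
  end.

Definition vv (n : nat) (i : nat) (x : vtx n) : bool :=
  (x.1 == false) && ((x.2 : nat) == i %% n).

Definition is_rdf (n : nat) (f : vtx n -> nat) : Prop :=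
  (forall w, f w <= 2) /\
  (forall w, f w = 0 -> exists w', padj w w' && (f w' == 2)).

Definition weight (n : nat) (f : vtx n -> nat) : nat := \sum_(w : vtx n) f w.

Definition V2 (n : nat) (f : vtx n -> nat) : {set vtx n} := [set w | f w == 2].

Local Open Scope ring_scope.

Definition g_f (n : nat) (f : vtx n -> nat) (w : vtx n) : rat :=
  if f w == 2%N then 1 / 2
  else if f w == 1%N then 1
  else (#|[set y | padj w y && (f y == 2%N)]|)%:R / 2.

Definition r_f (n : nat) (f : vtx n -> nat) (w : vtx n) : rat := g_f f w - 1 / 2.

Definition r_fS (n : nat) (f : vtx n -> nat) (S : {set vtx n}) : rat :=
  \sum_(w in S) r_f f w.

Definition Vp (n : nat) (i t : nat) : {set vtx n} :=
  [set w : vtx n | has (fun j => (w.2 : nat) == (j %% n)%N) (iota i t)].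

(* Local surgery shows that no vertex
   labelled 1 or 2 is adjacent to a 2 (relabel the 1 to 0; or relabel one of two
   adjacent 2's to 0 and its at most two private neighbours to 1), and that every 2
   has at least two private neighbours (else relabel it and its private neighbour,
   if any, to 1).  These rules only look at distance-two neighbourhoods, so a 2 on
   v_c constrains the 18 vertices of columns c-4, ..., c+4 of P(n,2).  An exhaustive
   search over the labellings of these 18 vertices shows that the rules force
   r_f >= 1 > 1/2 on the columns c-2, ..., c+2; for c = i+2 and c = i+4 these five
   columns lie in V'(i,7). *)

From HB Require Import structures.
From mathcomp Require Import all_boot all_order all_algebra zify lra.
Set Implicit Arguments. Unset Strict Implicit. Unset Printing Implicit Defensive.
Import Order.TTheory GRing.Theory Num.Theory.

Section OptimalRomanFunctions.

Variables (T : finType) (adj : rel T).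
Hypothesis adj_sym : symmetric adj.

Definition roman (g : T -> nat) : Prop :=
  (forall w, g w <= 2) /\ (forall w, g w = 0 -> exists w', adj w w' && (g w' == 2)).

Definition twos (g : T -> nat) : {set T} := [set w | g w == 2].

Variable f : T -> nat.
Hypotheses (f_roman : roman f)
  (f_min : forall g, roman g -> \sum_w f w <= \sum_w g w)
  (f_fewest_twos : forall g, roman g -> \sum_w g w = \sum_w f w -> #|twos f| <= #|twos g|).

Lemma no_better_roman g :
  roman g -> \sum_w g w <= \sum_w f w -> #|twos g| < #|twos f| -> False.
Proof.
move=> rg le_gf lt_twos.
have eq_gf : \sum_w g w = \sum_w f w by apply/eqP; rewrite eqn_leq le_gf f_min.
by move: (f_fewest_twos rg eq_gf); rewrite leqNgt lt_twos.
Qed.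

Lemma one_next_to_two w y : f w = 1 -> adj w y -> f y != 2.
Proof.
move=> fw1 adj_wy; apply/eqP => fy2.
have ne_yw : y != w by apply/eqP => eq_yw; move: fy2; rewrite eq_yw fw1.
have rg : roman [eta f with w |-> 0].
  split=> [z | z] /=; first by case: eqP => // _; apply: f_roman.1.
  case: eqP => [-> _ | /eqP ne_zw fz0]; first by exists y; rewrite adj_wy (negbTE ne_yw) fy2.
  have [z' /andP [adj_zz' fz'2]] := f_roman.2 z fz0.
  exists z'; rewrite adj_zz' /=; case: (eqVneq z' w) => // eq_z'w.
  by move: fz'2; rewrite eq_z'w fw1.
have := f_min rg; rewrite (bigD1 w) // [X in _ <= X](bigD1 w) //=.
rewrite eqxx fw1 [X in _ <= _ + X](eq_bigr f) => [|z /negbTE -> //]; lia.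
Qed.

Definition private_nbr (x p : T) : bool :=
  [&& adj x p, f p == 0 & [forall z, adj p z && (f z == 2) ==> (z == x)]].

Definition demote (x : T) (v : nat) (w : T) : nat :=
  if private_nbr x w then 1 else if w == x then v else f w.

Section Demote.

Variables (x : T) (v : nat).
Hypothesis fx2 : f x = 2.

Lemma private_nbr_neq p : private_nbr x p -> p != x.
Proof. by case/and3P=> _ /eqP fp0 _; apply/eqP => eq_px; move: fp0; rewrite eq_px fx2. Qed.

Lemma demote_roman :
  v <= 2 -> (v = 0 -> exists y, [&& adj x y, y != x & f y == 2]) -> roman (demote x v).
Proof.
move=> v_le2 dom_x; split=> [w | w]; rewrite /demote.
  by case: ifP => // _; case: ifP => // _; apply: f_roman.1.
case: ifP => // not_priv.
case: (eqVneq w x) => [-> /dom_x [y /and3P [adj_xy ne_yx /eqP fy2]] | ne_wx fw0].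
  exists y; rewrite adj_xy (negbTE ne_yx) fy2 /=.
  by case: ifP => // /and3P [_ /eqP fy0 _]; move: fy2; rewrite fy0.
have [w' /andP [adj_ww' /eqP fw'2]] := f_roman.2 w fw0.
have not_priv_w' : private_nbr x w' = false by rewrite /private_nbr fw'2 andbF.
case: (eqVneq w' x) => [eq_w'x | ne_w'x].
  2: by exists w'; rewrite adj_ww' not_priv_w' (negbTE ne_w'x) fw'2.
have : ~~ [forall z, adj w z && (f z == 2) ==> (z == x)].
  by move: not_priv; rewrite /private_nbr -eq_w'x adj_sym adj_ww' fw0 /= => ->.
rewrite negb_forall => /existsP [z]; rewrite negb_imply => /andP [/andP [adj_wz /eqP fz2] ne_zx].
by exists z; rewrite adj_wz /private_nbr fz2 andbF (negbTE ne_zx).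
Qed.

Lemma demote_weight :
  \sum_w demote x v w + 2 = \sum_w f w + v + #|[set p | private_nbr x p]|.
Proof.
have not_priv_x : ~~ private_nbr x x by apply/negP => /private_nbr_neq; rewrite eqxx.
rewrite /demote (bigID (private_nbr x)) [in RHS](bigID (private_nbr x)) /=.
rewrite (eq_bigr (fun=> 1)) => [|p priv]; last by rewrite priv.
rewrite sum1_card cardsE.
rewrite [X in _ = X + _ + _ + _]big1 => [|p]; last by case/and3P => _ /eqP ->.
rewrite (bigD1 x) // [X in _ = _ + X + _ + _](bigD1 x) //= eqxx fx2.
rewrite (eq_bigr f) => [|w /andP [/negbTE -> /negbTE ->]] //; lia.
Qed.

Lemma demote_twos : v != 2 -> #|twos (demote x v)| < #|twos f|.
Proof.
move=> v_ne2; have -> : twos (demote x v) = twos f :\ x.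
  apply/setP => w; rewrite !inE /demote; case: ifP => [/and3P [_ /eqP -> _] | _].
    by rewrite andbF.
  by case: (eqVneq w x) => [->|] //=; rewrite (negbTE v_ne2).
by rewrite [X in _ < X](cardsD1 x) inE fx2.
Qed.

End Demote.

Lemma two_private_nbrs x : f x = 2 -> 1 < #|[set p | private_nbr x p]|.
Proof.
move=> fx2; rewrite ltnNge; apply/negP => few_priv.
apply: (no_better_roman (g := demote x 1)).
- by apply: demote_roman.
- by have := demote_weight 1 fx2; lia.
- exact: demote_twos.
Qed.

Lemma two_next_to_two x y :
  irreflexive adj -> #|[set z | adj x z]| <= 3 -> f x = 2 -> adj x y -> f y != 2.
Proof.
move=> adj_irr deg_x fx2 adj_xy; apply/eqP => fy2.
have ne_yx : y != x by apply: contraPneq adj_xy => ->; rewrite adj_irr.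
have few_priv : #|[set p | private_nbr x p]| <= 2.
  have : [set p | private_nbr x p] \subset [set z | adj x z] :\ y.
    apply/subsetP => p; rewrite !inE => /and3P [adj_xp /eqP fp0 _].
    by rewrite adj_xp andbT; apply: contraPneq fp0 => ->; rewrite fy2.
  move/subset_leq_card; move: deg_x; rewrite [X in X <= 3](cardsD1 y) inE adj_xy; lia.
apply: (no_better_roman (g := demote x 0)).
- by apply: demote_roman => // _; exists y; rewrite adj_xy ne_yx fy2.
- by have := demote_weight 0 fx2; lia.
- exact: demote_twos.
Qed.

End OptimalRomanFunctions.

Section BacktrackingSearch.

Variables (R : Type) (vars : R -> seq nat) (holds : R -> (nat -> nat) -> bool).
Hypothesis holds_local : forall r a b, {in vars r, a =1 b} -> holds r a = holds r b.
Variable rules : seq R.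

Definition violated (p : seq nat) (r : R) : bool :=
  all (fun j => j < size p) (vars r) && ~~ holds r (nth 0 p).

(* An [if] rather than [||]: the VM evaluates both arguments of [orb], which would
   explore the pruned subtrees. *)
Fixpoint refuted (m : nat) (p : seq nat) : bool :=
  if has (violated p) rules then true
  else if m is m'.+1 then all (fun v => refuted m' (rcons p v)) [:: 0; 1; 2] else false.

Lemma refuted_sound m p a :
  refuted m p -> (forall j, j < size p -> a j = nth 0 p j) ->
  (forall j, j < size p + m -> a j <= 2) -> ~~ all (holds^~ a) rules.
Proof.
elim: m p => [|m IHm] p /orP [viol | search] a_p a_le2 //; last first.
- have [v v_in av] : exists2 v, v \in [:: 0; 1; 2] & a (size p) = v.
    exists (a (size p)) => //; have : a (size p) <= 2 by apply: a_le2; lia.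
    by rewrite !inE; case: (a (size p)) => [|[|[|]]].
  have search_v : refuted m (rcons p v) := allP search v v_in.
  apply: (IHm _ search_v) => j; rewrite size_rcons => j_lt; last by apply: a_le2; lia.
  rewrite nth_rcons; move: j_lt; rewrite ltnS leq_eqVlt => /orP [/eqP ->|j_lt].
    by rewrite ltnn eqxx.
  by rewrite j_lt a_p.
all: rewrite -has_predC; apply: sub_has viol => r /andP [vars_p /negP not_holds].
all: by apply/negP; rewrite (holds_local (b := nth 0 p)) // => j /(allP vars_p) /a_p.
Qed.

End BacktrackingSearch.

Lemma eqn_mod_near a b d N :
  d < N -> a <= b + d -> b <= a + d -> (a == b %[mod N]) = (a == b).
Proof.
move=> lt_dN le_ab_d le_ba_d; apply/idP/eqP => [|-> //].
wlog le_ab : a b le_ab_d le_ba_d / a <= b => [sym | ].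
  by case: (leqP a b) => [|/ltnW] le; [apply: sym | rewrite eq_sym => /sym ->].
rewrite eq_sym eqn_mod_dvd //.
case: (posnP (b - a)) => [/eqP | gt0]; last by rewrite gtnNdvd //; lia.
by rewrite subn_eq0 => le_ba _; apply/eqP; rewrite eqn_leq le_ab.
Qed.

Lemma padj_sym n : symmetric (@padj n).
Proof. by case=> [[] i] [[] j]; rewrite /padj //= ?[_ == i]eq_sym // orbC. Qed.

Definition stride (b : bool) : nat := if b then 2 else 1.

Section PetersenVertices.

Variable n : nat.

Definition vert (b : bool) (m : nat) : vtx n.+1 := (b, inord (m %% n.+1)).

Lemma vert_val (b : bool) m : ((vert b m).2 : nat) = m %% n.+1.
Proof. by rewrite inordK // ltn_pmod. Qed.

Lemma vertE (x : vtx n.+1) : x = vert x.1 x.2.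
Proof. by case: x => b o; congr (_, _); apply: val_inj; rewrite /= modn_small ?inordK. Qed.

Lemma eq_vert b b' m m' : (vert b m == vert b' m') = (b == b') && (m == m' %[mod n.+1]).
Proof. by rewrite /vert xpair_eqE -val_eqE /= !inordK ?ltn_pmod. Qed.

Lemma vert_mod b m m' : m = m' %[mod n.+1] -> vert b m = vert b m'.
Proof. by rewrite /vert => ->. Qed.

Lemma padj_vert b b' m m' :
  padj (vert b m) (vert b' m') =
  if b == b' then (m + stride b == m' %[mod n.+1]) || (m' + stride b == m %[mod n.+1])
  else m == m' %[mod n.+1].
Proof. by rewrite /padj /= !inordK ?ltn_pmod //; case: b b' => [] [] /=; rewrite ?modnDml. Qed.

Lemma padj_vert_nbrs b m w : 0 < n -> padj (vert b m) w ->
  w \in [:: vert b (m + stride b); vert b (m + n.+1 - stride b); vert (~~ b) m].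
Proof.
move=> n_gt0; rewrite [w]vertE padj_vert !inE !eq_vert.
have le_s : stride b <= n.+1 by case: b.
case: (eqVneq b w.1) => [<- | ne_b] /=; last first.
  have -> : w.1 == ~~ b by move: ne_b; case: (w.1); case: (b).
  by move=> /eqP ->; rewrite eqxx.
case/orP => [eq_mod | eq_mod]; apply/or3P; [apply: Or31 | apply: Or32]; rewrite eq_sym //.
by rewrite -(eqn_modDr (stride b)) subnK ?modnDr 1?eq_sym //; lia.
Qed.

Lemma padj_irr (x : vtx n.+1) : 1 < n -> padj x x = false.
Proof.
move=> n_gt1; rewrite [x]vertE padj_vert eqxx orbb -[X in _ == X %[mod _]]addn0 eqn_modDl mod0n.
by rewrite modn_small; case: (x.1) => //=; lia.
Qed.

Lemma padj_deg (x : vtx n.+1) : 0 < n -> #|[set y | padj x y]| <= 3.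
Proof.
move=> n_gt0; rewrite [x]vertE.
pose nbrs := [:: vert x.1 (x.2 + stride x.1); vert x.1 (x.2 + n.+1 - stride x.1);
                 vert (~~ x.1) x.2].
apply: leq_trans (card_size nbrs).
by apply/subset_leq_card/subsetP => y; rewrite inE => /padj_vert_nbrs; apply.
Qed.

Lemma vv_vert m (x : vtx n.+1) : vv m x -> x = vert false m.
Proof.
case/andP=> /eqP x1 /eqP x2; apply/eqP; rewrite [x]vertE eq_vert x1 eqxx /=.
by rewrite x2 modn_mod.
Qed.

End PetersenVertices.

(* A strip of 9 consecutive columns of P(n,2): index k < 18 stands for column k./2,
   on the inner cycle iff k is odd. *)
Definition strip_nbrs (k : nat) : seq nat :=
  let b := odd k in let c := k./2 in let s := stride b in
  [seq b + d.*2 | d <- (if s <= c then [:: c - s] else [::]) ++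
                       (if c + s <= 8 then [:: c + s] else [::])] ++ [:: ~~ b + c.*2].

Definition interior (k : nat) : bool := stride (odd k) <= k./2 <= 8 - stride (odd k).

(* Columns 2, ..., 6 of the strip. *)
Definition window : seq nat := iota 4 10.

(* Only the neighbours of p inside the strip are inspected, so [private_nbr] implies it. *)
Definition strip_private (a : nat -> nat) (k p : nat) : bool :=
  (a p == 0) && all (fun z => (z == k) || (a z != 2)) (strip_nbrs p).

Definition strip_excess (a : nat -> nat) (k : nat) : nat :=
  if a k == 2 then 0 else if a k == 1 then 1
  else (count (fun y => a y == 2) (strip_nbrs k)).-1.

Inductive rule :=
  | Dominated of nat
  | NoTwoNextToPositive of nat
  | TwoPrivateNbrs of nat
  | CentreIsTwo
  | ExcessAtMostOne.

Definition rule_vars (r : rule) : seq nat :=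
  match r with
  | Dominated k | NoTwoNextToPositive k => k :: strip_nbrs k
  | TwoPrivateNbrs k => k :: strip_nbrs k ++ flatten (map strip_nbrs (strip_nbrs k))
  | CentreIsTwo => [:: 8]
  | ExcessAtMostOne => flatten [seq k :: strip_nbrs k | k <- window]
  end.

Definition rule_holds (r : rule) (a : nat -> nat) : bool :=
  match r with
  | Dominated k => (a k == 0) ==> has (fun y => a y == 2) (strip_nbrs k)
  | NoTwoNextToPositive k => (a k != 0) ==> all (fun y => a y != 2) (strip_nbrs k)
  | TwoPrivateNbrs k => (a k == 2) ==> (1 < count (strip_private a k) (strip_nbrs k))
  | CentreIsTwo => a 8 == 2
  | ExcessAtMostOne => sumn (map (strip_excess a) window) <= 1
  end.

Definition strip_rules : seq rule :=
  CentreIsTwo :: ExcessAtMostOne ::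
  [seq NoTwoNextToPositive k | k <- iota 0 18] ++
  [seq Dominated k | k <- iota 0 18 & interior k] ++
  [seq TwoPrivateNbrs k | k <- iota 0 18 & interior k].

Lemma strip_search : refuted rule_vars rule_holds strip_rules 18 [::].
Proof. vm_compute. reflexivity. Qed.

Lemma rule_local r a b : {in rule_vars r, a =1 b} -> rule_holds r a = rule_holds r b.
Proof.
case: r => [k | k | k | |] eq_ab; rewrite /rule_holds ?eq_ab ?mem_head //.
- by congr (_ ==> _); apply: eq_in_has => y y_in; rewrite eq_ab // in_cons y_in orbT.
- by congr (_ ==> _); apply: eq_in_all => y y_in; rewrite eq_ab // in_cons y_in orbT.
- congr (_ ==> (1 < _)); apply: eq_in_count => p p_in.
  rewrite /strip_private eq_ab; last by rewrite in_cons mem_cat p_in orbT.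
  congr (_ && _); apply: eq_in_all => z z_in; rewrite eq_ab //.
  by rewrite in_cons mem_cat; apply/orP; right; apply/orP; right; apply/flatten_mapP; exists p.
- suff -> : map (strip_excess a) window = map (strip_excess b) window by [].
  apply/eq_in_map => w w_in.
  have vars_w : {subset w :: strip_nbrs w <= flatten [seq k :: strip_nbrs k | k <- window]}.
    by move=> y y_in; apply/flatten_mapP; exists w.
  rewrite /strip_excess eq_ab ?vars_w ?mem_head //.
  by congr (if _ then _ else if _ then _ else (_).-1); apply: eq_in_count => y y_in;
    rewrite eq_ab // vars_w // in_cons y_in orbT.
Qed.

Lemma strip_rules_inconsistent a :
  (forall j, j < 18 -> a j <= 2) -> ~~ all (rule_holds^~ a) strip_rules.
Proof. by move=> a_le2; apply: (refuted_sound rule_local strip_search). Qed.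

Lemma forall_strip_index (P : pred nat) : all P (iota 0 18) -> forall k, k < 18 -> P k.
Proof. by move=> /allP P_all k lt_k; apply: P_all; rewrite mem_iota. Qed.

Lemma strip_nbrs_sym k y : k < 18 -> y \in strip_nbrs k -> k \in strip_nbrs y.
Proof.
move=> lt_k; move: y; apply/allP; move: k lt_k.
by apply: (forall_strip_index (P := fun k => all (fun y => k \in strip_nbrs y) (strip_nbrs k))).
Qed.

Lemma strip_nbrs_lt k y : k < 18 -> y \in strip_nbrs k -> y < 18.
Proof.
move=> lt_k; move: y; apply/allP; move: k lt_k.
by apply: (forall_strip_index (P := fun k => all (fun y => y < 18) (strip_nbrs k))).
Qed.

Lemma strip_nbrs_near k y :
  k < 18 -> y \in strip_nbrs k -> (y./2 <= k./2 + 2) && (k./2 <= y./2 + 2).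
Proof.
move=> lt_k; move: y; apply/allP; move: k lt_k.
by apply: (forall_strip_index
  (P := fun k => all (fun y => (y./2 <= k./2 + 2) && (k./2 <= y./2 + 2)) (strip_nbrs k))).
Qed.

Lemma uniq_strip_nbrs k : k < 18 -> uniq (strip_nbrs k).
Proof. by move: k; apply: (forall_strip_index (P := fun k => uniq (strip_nbrs k))). Qed.

Lemma window_interior : all interior window.
Proof. by []. Qed.

Lemma window_columns k : k \in window -> 2 <= k./2 <= 6.
Proof. by move: k; apply/allP. Qed.

Lemma interior_lt k : interior k -> k < 18.
Proof. by case/andP=> _; rewrite -[k]odd_double_half -addnn; case: (odd k) => /=; lia. Qed.

Section Strip.

Variables (n K : nat).

(* For n < 8 distinct indices may name the same vertex; only neighbourhoods are
   injective (see [strip_inj]). *)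
Definition strip (k : nat) : vtx n.+1 := vert n (odd k) (K + k./2).

Lemma strip_bit_double (b : bool) d : strip (b + d.*2) = vert n b (K + d).
Proof. by rewrite /strip oddD odd_double addbF oddb half_bit_double. Qed.

Lemma strip_nbrs_adj k y : y \in strip_nbrs k -> padj (strip k) (strip y).
Proof.
rewrite /strip_nbrs mem_cat mem_seq1 => /orP [/mapP [d d_in ->] | /eqP ->];
  rewrite strip_bit_double /strip padj_vert; last by case: (odd k); rewrite /= eqxx.
rewrite eqxx; move: d_in; rewrite mem_cat.
case: ifP => [le_s |_]; case: ifP => _; rewrite ?inE => /orP [] // /eqP ->.
all: first [by rewrite addnA eqxx | by rewrite -[K + (_ - _) + _]addnA subnK // eqxx orbT].
Qed.

Lemma strip_nbrs_complete k w :
  0 < n -> interior k -> padj (strip k) w -> exists2 y, y \in strip_nbrs k & w = strip y.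
Proof.
move=> n_gt0 /andP [le_s le_8] /(padj_vert_nbrs n_gt0); rewrite !inE => /or3P [] /eqP ->.
- exists (odd k + (k./2 + stride (odd k)).*2); last by rewrite strip_bit_double addnA.
  have le_s8 : k./2 + stride (odd k) <= 8 by move: le_8; case: (odd k) => /=; lia.
  rewrite /strip_nbrs mem_cat; apply/orP; left; apply/mapP; exists (k./2 + stride (odd k)) => //.
  by rewrite mem_cat le_s8 mem_head orbT.
- exists (odd k + (k./2 - stride (odd k)).*2); last first.
    rewrite strip_bit_double; apply: vert_mod.
    by rewrite (_ : _ - _ = K + (k./2 - stride (odd k)) + n.+1) ?modnDr //; lia.
  rewrite /strip_nbrs mem_cat; apply/orP; left; apply/mapP; exists (k./2 - stride (odd k)) => //.
  by rewrite mem_cat le_s mem_head.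
- by exists (~~ odd k + k./2.*2); rewrite ?strip_bit_double // mem_cat mem_seq1 eqxx orbT.
Qed.

Lemma strip_inj k y :
  4 <= n -> k./2 <= y./2 + 4 -> y./2 <= k./2 + 4 -> strip k = strip y -> k = y.
Proof.
move=> n_ge4 le_ky le_yk /eqP; rewrite eq_vert eqn_modDl (eqn_mod_near (d := 4)) //.
by case/andP=> /eqP odd_eq /eqP half_eq; rewrite -[k]odd_double_half odd_eq half_eq odd_double_half.
Qed.

Lemma uniq_strip_nbrs_image k : 4 <= n -> k < 18 -> uniq (map strip (strip_nbrs k)).
Proof.
move=> n_ge4 lt_k; rewrite map_inj_in_uniq ?uniq_strip_nbrs // => p q p_in q_in.
move: (strip_nbrs_near lt_k p_in) (strip_nbrs_near lt_k q_in) => /andP [? ?] /andP [? ?].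
by apply: strip_inj => //; lia.
Qed.

End Strip.

Lemma strip_in_Vp n K j k :
  K + 2 = j %[mod n.+1] -> k \in window -> strip n K k \in Vp n.+1 j 5.
Proof.
move=> eq_Kj /window_columns /andP [ge2 le6]; rewrite inE; apply/hasP.
exists (j + (k./2 - 2)); first by rewrite mem_iota; lia.
rewrite vert_val (_ : K + k./2 = K + 2 + (k./2 - 2)); last by lia.
by rewrite -modnDml eq_Kj modnDml.
Qed.

Definition excess n (f : vtx n -> nat) (w : vtx n) : nat :=
  if f w == 2 then 0 else if f w == 1 then 1
  else #|[set y | padj w y && (f y == 2)]|.-1.

Lemma r_f_excess n (f : vtx n -> nat) w : is_rdf f -> r_f f w = ((excess f w)%:R / 2)%R.
Proof.
move=> [f_le2 f_dom]; rewrite /r_f /g_f /excess.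
case: ifP => [_ | /negbT f_ne2]; first by rewrite mulr0n; lra.
case: ifP => [_ | /negbT f_ne1]; first by rewrite mulr1n; lra.
have fw0 : f w = 0 by move: (f_le2 w) f_ne1 f_ne2; case: (f w) => [|[|[|]]].
have [w' dom_w'] := f_dom w fw0.
have : 0 < #|[set y | padj w y && (f y == 2)]| by apply/card_gt0P; exists w'; rewrite inE.
by case: #|_| => // c _; rewrite -natr1 mulrDl addrK.
Qed.

Lemma ler_sum_subset (T : finType) (R : numDomainType) (A B : {pred T}) (F : T -> R) :
  {subset A <= B} -> (forall x, x \in B -> 0 <= F x)%R ->
  (\sum_(x in A) F x <= \sum_(x in B) F x)%R.
Proof.
move=> sAB F_ge0; rewrite [X in (_ <= X)%R](bigID (mem A)) /= -[X in (X <= _)%R]addr0 lerD //.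
  by rewrite [X in (_ <= X)%R](eq_bigl (mem A)) // => x; rewrite andb_idl // => /sAB.
by apply: sumr_ge0 => x /andP [/F_ge0].
Qed.

Lemma r_fS_subset n (f : vtx n -> nat) (S S' : {set vtx n}) :
  is_rdf f -> S \subset S' -> (r_fS f S <= r_fS f S')%R.
Proof.
move=> f_rdf /subsetP sSS'; apply: ler_sum_subset => // w _.
by rewrite r_f_excess // divr_ge0.
Qed.

Lemma Vp_subset n i j s t : i <= j -> j + s <= i + t -> Vp n j s \subset Vp n i t.
Proof.
move=> le_ij le_st; apply/subsetP => w; rewrite !inE => /hasP [l l_in eq_w].
by apply/hasP; exists l => //; move: l_in; rewrite !mem_iota; lia.
Qed.

Section OptimalOnPetersen.

Variables (n : nat) (f : vtx n.+1 -> nat).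
Hypotheses (n_ge4 : 4 <= n) (f_rdf : is_rdf f)
  (f_min : forall g : vtx n.+1 -> nat, is_rdf g -> weight f <= weight g)
  (f_fewest_twos : forall g : vtx n.+1 -> nat, is_rdf g -> weight g = weight f ->
      #|V2 f| <= #|V2 g|).

Let n_gt1 : 1 < n := leq_trans (isT : 1 < 4) n_ge4.
Let n_gt0 : 0 < n := ltnW n_gt1.

Section AroundColumn.

Variable K : nat.

Local Notation a := (fun k => f (strip n K k)).

Lemma excess_strip k : interior k -> excess f (strip n K k) = strip_excess a k.
Proof.
move=> int_k; have lt_k := interior_lt int_k.
rewrite /excess /strip_excess; congr (if _ then _ else if _ then _ else (_).-1).
have -> : [set y | padj (strip n K k) y && (f y == 2)] =
          [set y in [seq y <- map (strip n K) (strip_nbrs k) | f y == 2]].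
  apply/setP => y; rewrite !inE mem_filter andbC; congr (_ && _); apply/idP/idP.
    by case/(strip_nbrs_complete n_gt0 int_k) => z z_in ->; apply: map_f.
  by case/mapP=> z z_in ->; apply: strip_nbrs_adj.
rewrite cardsE (card_uniqP _) ?filter_uniq ?uniq_strip_nbrs_image //.
by rewrite size_filter count_map.
Qed.

Lemma strip_no_two_next_to_positive k : rule_holds (NoTwoNextToPositive k) a.
Proof.
apply/implyP => fk_pos; apply/allP => y /(strip_nbrs_adj n K) adj_ky.
have [fk1 | fk2] : f (strip n K k) = 1 \/ f (strip n K k) = 2.
  by move: fk_pos (f_rdf.1 (strip n K k)); case: (f _) => [|[|[|]]]; auto.
- exact: (one_next_to_two (adj := @padj n.+1) f_rdf f_min fk1 adj_ky).
- apply: (two_next_to_two (@padj_sym _) f_rdf f_min f_fewest_twos _ _ fk2 adj_ky).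
    by move=> x; apply: padj_irr.
  exact: padj_deg.
Qed.

Lemma strip_dominated k : interior k -> rule_holds (Dominated k) a.
Proof.
move=> int_k; apply/implyP => /eqP fk0.
have [w /andP [adj_kw /eqP fw2]] := f_rdf.2 _ fk0.
have [y y_in eq_w] := strip_nbrs_complete (K := K) n_gt0 int_k adj_kw.
by apply/hasP; exists y; rewrite // -eq_w fw2.
Qed.

Lemma strip_private_nbr k p : interior k -> private_nbr (@padj n.+1) f (strip n K k) p ->
  exists2 p', p' \in strip_nbrs k & p = strip n K p' /\ strip_private a k p'.
Proof.
move=> int_k /and3P [adj_kp /eqP fp0 /forallP priv_p].
have [p' p'_in eq_p] := strip_nbrs_complete (K := K) n_gt0 int_k adj_kp.
exists p' => //; split=> //; rewrite /strip_private -eq_p fp0 eqxx /=.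
apply/allP => z z_in; case: (eqVneq (a z) 2) => [fz2 | ]; last by rewrite orbT.
have := priv_p (strip n K z); rewrite eq_p strip_nbrs_adj //= fz2 eqxx /= => /eqP eq_zk.
have lt_k := interior_lt int_k; have lt_p' := strip_nbrs_lt lt_k p'_in.
move: (strip_nbrs_near lt_p' z_in) (strip_nbrs_near lt_p' (strip_nbrs_sym lt_k p'_in)).
by case/andP=> ? ? /andP [? ?]; rewrite (strip_inj n_ge4 _ _ eq_zk) ?eqxx //; lia.
Qed.

Lemma strip_two_private_nbrs k : interior k -> rule_holds (TwoPrivateNbrs k) a.
Proof.
move=> int_k; apply/implyP => /eqP fk2.
have /card_gt1P [p [q [p_priv q_priv ne_pq]]] :=
  two_private_nbrs (@padj_sym _) f_rdf f_min f_fewest_twos fk2.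
move: p_priv q_priv; rewrite !inE => p_priv q_priv.
have [p' p'_in [eq_p priv_p']] := strip_private_nbr int_k p_priv.
have [q' q'_in [eq_q priv_q']] := strip_private_nbr int_k q_priv.
have ne_pq' : p' != q' by apply: contraNneq ne_pq => eq_pq'; rewrite eq_p eq_q eq_pq'.
rewrite -size_filter (uniq_leq_size (s1 := [:: p'; q'])) //= ?inE ?ne_pq' //.
by move=> z; rewrite !inE => /orP [] /eqP ->; rewrite mem_filter ?priv_p' ?priv_q'.
Qed.

Lemma strip_rules_hold :
  f (strip n K 8) = 2 -> sumn (map (strip_excess a) window) <= 1 ->
  all (rule_holds^~ a) strip_rules.
Proof.
move=> centre small.
rewrite /strip_rules -[_ :: _ :: _]/([:: CentreIsTwo; ExcessAtMostOne] ++ _).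
rewrite !all_cat !all_map !all_filter; apply/and4P; split.
- by apply/and3P; split; [apply/eqP | apply: small |].
all: apply/allP => k _ /=.
- exact: strip_no_two_next_to_positive.
- by apply/implyP; apply: strip_dominated.
- by apply/implyP; apply: strip_two_private_nbrs.
Qed.

Lemma window_excess : f (strip n K 8) = 2 -> 1 < sumn (map (strip_excess a) window).
Proof.
move=> centre; rewrite ltnNge; apply/negP => small.
by have := strip_rules_inconsistent (a := a) (fun j _ => f_rdf.1 _); rewrite strip_rules_hold.
Qed.

End AroundColumn.

Lemma window_r_f_ge1 K :
  f (strip n K 8) = 2 -> (1 <= \sum_(k <- window) r_f f (strip n K k))%R.
Proof.
move=> centre; have := window_excess centre; set e := strip_excess _.
rewrite big_seq (eq_bigr (fun k => ((e k)%:R / 2)%R)); last first.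
  by move=> k k_in; rewrite r_f_excess // excess_strip // (allP window_interior).
rewrite -big_seq -mulr_suml -natr_sum sumnE big_map -(ler_nat rat) => ?; lra.
Qed.

Lemma r_fS_Vp_ge1 j : f (vert n false (j + 2)) = 2 -> (1 <= r_fS f (Vp n.+1 j 5))%R.
Proof.
move=> fj2; pose K := j + n.-1.
have K_j : K + 2 = j %[mod n.+1] by rewrite (_ : K + 2 = j + n.+1) ?modnDr //; lia.
have centre : f (strip n K 8) = 2.
  suff -> : strip n K 8 = vert n false (j + 2) by [].
  apply: vert_mod; rewrite (_ : K + 4 = j + 2 + n.+1) ?modnDr //; lia.
apply: le_trans (window_r_f_ge1 centre) _.
rewrite -(big_map (strip n K) xpredT) big_uniq; last first.
  rewrite map_inj_in_uniq ?iota_uniq // => k y.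
  move=> /window_columns /andP [? ?] /window_columns /andP [? ?].
  by apply: strip_inj => //; lia.
apply: ler_sum_subset => [_ /mapP [k k_in ->] | w _]; first exact: strip_in_Vp.
by rewrite r_f_excess // divr_ge0.
Qed.

End OptimalOnPetersen.

Local Open Scope ring_scope.

Theorem lemma2p6 (n : nat) (f : vtx n -> nat) (i : nat) :
  (5 <= n)%N ->
  is_rdf f ->
  (forall g : vtx n -> nat, is_rdf g -> (weight f <= weight g)%N) ->
  (forall g : vtx n -> nat, is_rdf g -> weight g = weight f ->
      (#|V2 f| <= #|V2 g|)%N) ->
  r_fS f (Vp n i 7) <= 1 / 2 ->
  (forall x : vtx n, vv (i + 2)%N x -> x \notin V2 f) /\
  (forall x : vtx n, vv (i + 4)%N x -> x \notin V2 f).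
Proof.
case: n f => [// | n] f n_ge4 f_rdf f_min f_fewest_twos small.
have no_two j : (i <= j)%N -> (j + 5 <= i + 7)%N -> forall x, vv (j + 2)%N x -> x \notin V2 f.
  move=> le_ij le_j7 x /vv_vert ->; rewrite inE; apply/negP => /eqP fx2.
  have := le_trans (r_fS_Vp_ge1 n_ge4 f_rdf f_min f_fewest_twos fx2)
            (le_trans (r_fS_subset f_rdf (Vp_subset _ le_ij le_j7)) small).
  by rewrite ler_pdivlMr ?mul1r // ler1n.
split; first by apply: no_two; lia.
have -> : (i + 4 = i + 2 + 2)%N by lia.
by apply: no_two; lia.
Qed.
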